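(* Let $k\ge 2$ and $n\ge 1$ be integers, $E=\{0,\dots,k-1\}$, and let $L_n\subseteq E^n$ and $\varphi:L_n\to E^{n-1}$ be as defined in the context. Then $\varphi$ is a bijection, and for every $A\subseteq L_n$, $A$ is an intersecting antichain in $E^n$ if and only if $\varphi(A)$ is an intersecting antichain in $E^{n-1}$ (equivalently, both $\varphi$ and $\varphi^{-1}$ map intersecting antichains to intersecting antichains).
   Context: For $\mathbf a=(a_1,\dots,a_m),\mathbf b=(b_1,\dots,b_m)\in E^m$ write $\mathbf a\preceq\mathbf b$ if $a_i\le b_i$ for all $i$. A set $A\subseteq E^m$ is an antichain if there are no distinct $\mathbf a,\mathbf b\in A$ with $\mathbf a\preceq\mathbf b$. A set $A\subseteq E^m$ is intersecting if for all $\mathbf a,\mathbf b\in A$ (including $\mathbf a=\mathbf b$) there is $i$ with $a_i+b_i\ge k$. The weight is $w(\mathbf a)=a_1+\dots+a_m$, and $\mathcal B_t=\{\mathbf a\in E^n: w(\mathbf a)=t\}$. Let $g=\lfloor n(k-1)/2\rfloor$ and $C_i=\{\mathbf a\in E^n: a_1=i\}$. Define $L_n=(\mathcal B_0\cup\dots\cup\mathcal B_g)\cap(C_0\cup C_{k-1})$ if $n(k-1)$ is odd, and $L_n=((\mathcal B_0\cup\dots\cup\mathcal B_{g-1})\cap(C_0\cup C_{k-1}))\cup(\mathcal B_g\cap C_0)$ if $n(k-1)$ is even. For $a\in E$ let $\overline a=k-1-a$. Define $\varphi(a_1,\dots,a_n)=(a_2,\dots,a_n)$ if $a_1=0$, and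 $\varphi(a_1,\dots,a_n)=(\overline{a}_2,\dots,\overline{a}_n)$ if $a_1=k-1$. *)

(* E = 'I_k, E^n = {ffun 'I_n -> 'I_k}; coordinate a_{i+1} is a i. *)
From mathcomp Require Import all_boot.
Set Implicit Arguments. Unset Strict Implicit. Unset Printing Implicit Defensive.

Definition vec (k n : nat) := {ffun 'I_n -> 'I_k}.

Definition vle k n (a b : vec k n) : bool := [forall i, (a i <= b i)%N].

Definition antichain k n (A : {set vec k n}) : Prop :=
  forall a b, a \in A -> b \in A -> a != b -> ~~ vle a b.

Definition intersecting k n (A : {set vec k n}) : Prop :=
  forall a b, a \in A -> b \in A -> exists i : 'I_n, (k <= a i + b i)%N.

Definition weight k n (a : vec k n) : nat := \sum_(i < n) (a i : nat).

(* the value of coordinate j (0-based) as a nat; 0 if out of range *)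
Definition coord k n (a : vec k n) (j : nat) : nat :=
  if @insub nat (fun x => x < n) 'I_n j is Some i then (a i : nat) else 0.

Definition gval k n : nat := (n * (k - 1))./2.

Definition Lset k n : {set vec k n} :=
  [set a : vec k n |
    if odd (n * (k - 1)) then
      (weight a <= gval k n) && ((coord a 0 == 0) || (coord a 0 == k - 1))
    else
      ((weight a < gval k n) && ((coord a 0 == 0) || (coord a 0 == k - 1)))
      || ((weight a == gval k n) && (coord a 0 == 0))].

Lemma succ_lt n (i : 'I_n.-1) : (i.+1 < n)%N.
Proof. case: n i => [|n] [i Hi] //=. Qed.

Definition succ_ord n (i : 'I_n.-1) : 'I_n := Ordinal (succ_lt i).

Definition cmpl k (x : 'I_k) : 'I_k := rev_ord x.

Definition phi k n (a : vec k n) : vec k n.-1 :=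
  [ffun i : 'I_n.-1 => if coord a 0 == 0 then a (succ_ord i) else cmpl (a (succ_ord i))].

From mathcomp Require Import all_boot zify.
Set Implicit Arguments. Unset Strict Implicit. Unset Printing Implicit Defensive.

(* A family is an intersecting antichain iff each pair in it is good: the two
   vectors cross (some coordinate sum is at least k) and are equal or
   incomparable.  So it suffices that phi preserves good pairs inside L_n.
   Vectors of L_n start with 0 or k-1 and have weight at most half of n(k-1),
   strictly less when they start with k-1.  Complementation sends weight w to
   (n-1)(k-1) - w, so phi maps these two kinds onto the vectors of weight at
   most, resp. more than, half of (n-1)(k-1): phi is bijective.  For equal heads
   crossing and comparability pass to the tails; for head k-1 both the vectors
   and the complemented tails cross for weight reasons, and complementation
   reverses the order.  For heads 0 and k-1 the weight bounds exclude b <= a and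
   phi b <= phi a, and as x crosses y iff x is not below the complement of y,
   both pairs are good iff the tail of a is below neither the tail of b nor its
   complement. *)

Section Vectors.

Variables k m : nat.
Implicit Types x y : vec k m.

Definition vcompl x : vec k m := [ffun i => cmpl (x i)].

Definition vcross x y : bool := [exists i, k <= x i + y i].

Definition vincomp x y : bool := (x == y) || ~~ vle x y && ~~ vle y x.

Definition vcompat x y : bool := vcross x y && vincomp x y.

Lemma vcomplK : involutive vcompl.
Proof. by move=> x; apply/ffunP=> i; rewrite !ffunE /cmpl rev_ordK. Qed.

Lemma weight_vcompl x : weight (vcompl x) + weight x = m * (k - 1).
Proof.
rewrite /weight -big_split /= -[m in RHS]card_ord -sum_nat_const.
by apply: eq_bigr => i _; rewrite ffunE /=; have := ltn_ord (x i); lia.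
Qed.

Lemma vle_refl x : vle x x.
Proof. exact/forallP. Qed.

Lemma vle_weight x y : vle x y -> weight x <= weight y.
Proof. by move/forallP=> lexy; apply: leq_sum => i _. Qed.

Lemma vle_vcompl x y : vle (vcompl x) (vcompl y) = vle y x.
Proof.
apply: eq_forallb => i; rewrite !ffunE /=.
by have := ltn_ord (x i); have := ltn_ord (y i); lia.
Qed.

Lemma vcrossC x y : vcross x y = vcross y x.
Proof. by apply: eq_existsb => i; rewrite addnC. Qed.

Lemma vcrossE x y : vcross x y = ~~ vle x (vcompl y).
Proof.
rewrite /vcross /vle negb_forall; apply: eq_existsb => i; rewrite ffunE /=.
by have := ltn_ord (y i); lia.
Qed.

Lemma vcross_weight x y : m * (k - 1) < weight x + weight y -> vcross x y.
Proof.
apply: contraTT => /existsPn notk; rewrite -leqNgt /weight -big_split /=.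
rewrite -[m in X in _ <= X]card_ord -sum_nat_const.
by apply: leq_sum => i _; have := notk i; lia.
Qed.

Lemma vincompC x y : vincomp x y = vincomp y x.
Proof. by rewrite /vincomp eq_sym andbC. Qed.

Lemma vincomp_vcompl x y : vincomp (vcompl x) (vcompl y) = vincomp x y.
Proof. by rewrite /vincomp (can_eq vcomplK) !vle_vcompl andbC. Qed.

Lemma vincompE x y : ~~ vle y x -> vincomp x y = ~~ vle x y.
Proof.
move=> nleyx; rewrite /vincomp nleyx andbT.
by case: eqP => // eqxy; move: nleyx; rewrite eqxy vle_refl.
Qed.

Lemma vcompatC x y : vcompat x y = vcompat y x.
Proof. by rewrite /vcompat vcrossC vincompC. Qed.

Lemma intersecting_antichainP (B : {set vec k m}) :
  intersecting B /\ antichain B <-> {in B &, forall x y, vcompat x y}.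
Proof.
split=> [[crossB antiB] x y xB yB | compatB].
  apply/andP; split; first exact/existsP/crossB.
  rewrite /vincomp; case: eqP => //= /eqP nexy.
  by rewrite antiB //= antiB // eq_sym.
split=> x y xB yB.
  by have /andP[/existsP] := compatB x y xB yB.
by have /andP[_ /orP[->|/andP[]]] := compatB x y xB yB.
Qed.

End Vectors.

Section Tails.

Variables k m : nat.
Implicit Types a b : vec k m.+1.

Definition vtail a : vec k m := [ffun i => a (lift ord0 i)].

Definition vcons (x0 : 'I_k) (y : vec k m) : vec k m.+1 :=
  [ffun i => if unlift ord0 i is Some j then y j else x0].

Lemma vcons_head x0 y : vcons x0 y ord0 = x0.
Proof. by rewrite ffunE unlift_none. Qed.

Lemma vtail_vcons x0 y : vtail (vcons x0 y) = y.
Proof. by apply/ffunP=> i; rewrite !ffunE liftK. Qed.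

Lemma vhead_vtail_inj a b : a ord0 = b ord0 -> vtail a = vtail b -> a = b.
Proof.
move=> eq0 eqtl; apply/ffunP=> i; case: (unliftP ord0 i) => [j ->|->] //.
by have := congr1 (fun y : vec k m => y j) eqtl; rewrite !ffunE.
Qed.

Lemma weight_vtail a : weight a = a ord0 + weight (vtail a).
Proof.
by rewrite /weight big_ord_recl; congr (_ + _); apply: eq_bigr => i _; rewrite ffunE.
Qed.

Lemma vcross_vtail a b :
  vcross a b = (k <= a ord0 + b ord0) || vcross (vtail a) (vtail b).
Proof.
apply/existsP/orP => [[i]|[cross0|/existsP[j]]].
- case: (unliftP ord0 i) => [j ->|->] crossi; [right|by left].
  by apply/existsP; exists j; rewrite !ffunE.
- by exists ord0.
- by rewrite !ffunE; exists (lift ord0 j).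
Qed.

Lemma vle_vtail a b : vle a b = (a ord0 <= b ord0) && vle (vtail a) (vtail b).
Proof.
apply/forallP/andP => [leab|[le0 /forallP letl] i].
  by split; [exact: leab | apply/forallP => j; rewrite !ffunE].
by case: (unliftP ord0 i) => [j ->|->] //; have := letl j; rewrite !ffunE.
Qed.

Lemma vincomp_vtail a b :
  a ord0 = b ord0 -> vincomp a b = vincomp (vtail a) (vtail b).
Proof.
move=> eq0; rewrite /vincomp !vle_vtail eq0 leqnn /=; congr (_ || _).
by apply/eqP/eqP => [->//|]; apply: vhead_vtail_inj.
Qed.

Lemma coord_head a : coord a 0 = a ord0.
Proof. by rewrite /coord insubT /=; congr (nat_of_ord (a _)); apply: val_inj. Qed.

Lemma phiE a :
  phi a = if (a ord0 : nat) == 0 then vtail a else vcompl (vtail a).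
Proof.
apply/ffunP=> i; rewrite !ffunE coord_head.
have -> : succ_ord i = lift ord0 i by apply: val_inj.
by case: ifP; rewrite !ffunE.
Qed.

End Tails.

Section Lset.

Variables k m : nat.
Hypothesis k_gt1 : 1 < k.
Implicit Types a b : vec k m.+1.

Lemma LsetP a :
  a \in Lset k m.+1 <->
  ((a ord0 : nat) = 0 /\ 2 * weight a <= m.+1 * (k - 1)) \/
  ((a ord0 : nat) = k - 1 /\ 2 * weight a < m.+1 * (k - 1)).
Proof.
rewrite inE coord_head /gval; have := odd_double_half (m.+1 * (k - 1)).
by case: odd => /= total; split; lia.
Qed.

Lemma phi_head0 a : (a ord0 : nat) = 0 -> phi a = vtail a.
Proof. by move=> a0; rewrite phiE a0. Qed.

Lemma phi_head_max a : (a ord0 : nat) = k - 1 -> phi a = vcompl (vtail a).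
Proof. by move=> a0; rewrite phiE a0; case: eqP => //; lia. Qed.

Lemma vcompat_phi_head0 a b :
  (a ord0 : nat) = 0 -> (b ord0 : nat) = 0 -> vcompat a b = vcompat (phi a) (phi b).
Proof.
move=> a0 b0; have eq0 : a ord0 = b ord0 by apply: ord_inj; rewrite a0 b0.
rewrite !phi_head0 // /vcompat vcross_vtail vincomp_vtail // a0 b0.
by case: leqP => //; lia.
Qed.

Lemma vcompat_phi_head_max a b :
  (a ord0 : nat) = k - 1 -> 2 * weight a < m.+1 * (k - 1) ->
  (b ord0 : nat) = k - 1 -> 2 * weight b < m.+1 * (k - 1) ->
  vcompat a b = vcompat (phi a) (phi b).
Proof.
move=> a0 wa b0 wb; rewrite !phi_head_max // /vcompat vincomp_vcompl.
have crossab : vcross a b by rewrite vcross_vtail a0 b0; case: leqP => //; lia.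
have crossc : vcross (vcompl (vtail a)) (vcompl (vtail b)).
  apply: vcross_weight; have := weight_vcompl (vtail a).
  have := weight_vcompl (vtail b); rewrite !weight_vtail in wa wb; lia.
by rewrite crossab crossc vincomp_vtail //; apply: ord_inj; rewrite a0 b0.
Qed.

Lemma vcompat_phi_mixed a b :
  (a ord0 : nat) = 0 -> 2 * weight a <= m.+1 * (k - 1) ->
  (b ord0 : nat) = k - 1 -> 2 * weight b < m.+1 * (k - 1) ->
  vcompat a b = vcompat (phi a) (phi b).
Proof.
move=> a0 wa b0 wb; rewrite phi_head0 // phi_head_max //.
have nle_ba : ~~ vle b a by rewrite vle_vtail a0 b0; case: leqP => //; lia.
have nle_tb_ta : ~~ vle (vcompl (vtail b)) (vtail a).
  apply/negP=> /vle_weight; have := weight_vcompl (vtail b).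
  by rewrite !weight_vtail a0 b0 (mulSn m) in wa wb; lia.
rewrite /vcompat (vincompE nle_ba) (vincompE nle_tb_ta) vcross_vtail vle_vtail.
rewrite a0 b0 !vcrossE vcomplK; case: leqP => /=; first lia.
by move=> _; rewrite andbC.
Qed.

Lemma vcompat_phi a b : a \in Lset k m.+1 -> b \in Lset k m.+1 ->
  vcompat a b = vcompat (phi a) (phi b).
Proof.
move=> /LsetP[[a0 wa]|[a0 wa]] /LsetP[[b0 wb]|[b0 wb]].
- exact: vcompat_phi_head0.
- exact: vcompat_phi_mixed.
- by rewrite vcompatC vcompat_phi_mixed // vcompatC.
- exact: vcompat_phi_head_max.
Qed.

Lemma phi_inj_Lset : {in Lset k m.+1 &, injective (@phi k m.+1)}.
Proof.
have eq_weight a b : vtail a = vcompl (vtail b) ->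
    weight a + weight b = a ord0 + b ord0 + m * (k - 1).
  move=> eqtl; rewrite !weight_vtail eqtl.
  by have := weight_vcompl (vtail b); lia.
move=> a b /LsetP[[a0 wa]|[a0 wa]] /LsetP[[b0 wb]|[b0 wb]].
- by rewrite !phi_head0 //; apply: vhead_vtail_inj; apply: ord_inj; rewrite a0 b0.
- by rewrite phi_head0 // phi_head_max // => /eq_weight; lia.
- by rewrite phi_head_max // phi_head0 // => /esym /eq_weight; lia.
- rewrite !phi_head_max // => /(can_inj (@vcomplK k m)).
  by apply: vhead_vtail_inj; apply: ord_inj; rewrite a0 b0.
Qed.

Lemma phi_onto_Lset (y : vec k m) : exists2 a, a \in Lset k m.+1 & phi a = y.
Proof.
have k_gt0 : 0 < k by lia.
have kpred_lt : k - 1 < k by lia.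
have := weight_vcompl y; case: (leqP (2 * weight y) (m.+1 * (k - 1))) => wy wc.
  exists (vcons (Ordinal k_gt0) y); last by rewrite phi_head0 ?vcons_head ?vtail_vcons.
  by apply/LsetP; left; rewrite weight_vtail vcons_head vtail_vcons.
exists (vcons (Ordinal kpred_lt) (vcompl y)).
  by apply/LsetP; right; rewrite weight_vtail vcons_head vtail_vcons /=; lia.
by rewrite phi_head_max ?vcons_head ?vtail_vcons ?vcomplK.
Qed.

End Lset.

Theorem theorem1 (k n : nat) (hk : (2 <= k)%N) (hn : (1 <= n)%N) :
  (forall a1 a2 : vec k n, a1 \in Lset k n -> a2 \in Lset k n ->
      phi a1 = phi a2 -> a1 = a2) /\
  (forall b : vec k n.-1, exists2 a : vec k n, a \in Lset k n & phi a = b) /\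
  (forall A : {set vec k n}, A \subset Lset k n ->
      (intersecting A /\ antichain A <->
       intersecting (@phi k n @: A) /\ antichain (@phi k n @: A))).
Proof.
case: n hn => // m _ /=.
split; [exact: phi_inj_Lset | split; first exact: phi_onto_Lset].
move=> A /subsetP AL; rewrite !intersecting_antichainP.
split=> [compatA _ _ /imsetP[a aA ->] /imsetP[b bA ->] | compatPA a b aA bA].
  by rewrite -vcompat_phi ?AL ?compatA.
by rewrite vcompat_phi ?AL ?compatPA ?imset_f.
Qed.
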